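(* In $\mathcal{V}$, for all $p,q\in P$: $p\preccurlyeq q$ if and only if $|S_p|\leqslant|S_q|$, and $p\preccurlyeq^\ast q$ if and only if $|S_p|\leqslant^\ast|S_q|$.
   Context: Work in $\mathsf{ZFA}$ (set theory with atoms) over a ground model of $\mathsf{ZFC}$ containing a doubly ordered set $\langle P,\preccurlyeq,\preccurlyeq^\ast\rangle$ (i.e. $\preccurlyeq$ a partial order on $P$, $\preccurlyeq^\ast$ a preorder on $P$, and $p\preccurlyeq q\Rightarrow p\preccurlyeq^\ast q$). Write $p\prec q$ for ($p\preccurlyeq q$ and $p\neq q$). For a quadruple $\langle x_0,x_1,x_2,x_3\rangle$ and $i<4$, $\mathrm{pr}_i(\langle x_0,x_1,x_2,x_3\rangle)=x_i$. For a set $S$, $\mathscr{S}(S)$ is the set of permutations of $S$. Define recursively $A_0=\{\langle0,p,\varnothing,k\rangle\mid p\in P,k\in\omega\}$ and $A_{n+1}=A_n\cup\{\langle n+1,q,a,0\rangle\mid q\in P,a\in A_n,\mathrm{pr}_1(a)\prec q\}\cup\{\langle n+1,q,a,k\rangle\mid q\in P,a\in A_n,\mathrm{pr}_1(a)\not\preccurlyeq q,\mathrm{pr}_1(a)\preccurlyeq^\ast q,k\in\omega\}$; let $A=\bigcup_{n}A_n$, whose elements serve as the atoms. Define groups $\mathcal{G}_n\subseteq\mathscr{S}(A_n)$: $\mathcal{G}_0=\{f\in\mathscr{S}(A_0)\mid \mathrm{pr}_1(f(a))=\mathrm{pr}_1(a)\text{ for all }a\in A_0\}$; for $f\in\mathscr{S}(A_{n+1})$,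 $f\in\mathcal{G}_{n+1}$ iff $f{\upharpoonright}A_n\in\mathcal{G}_n$ and for all $b\in A_{n+1}\setminus A_n$, $\mathrm{pr}_1(f(b))=\mathrm{pr}_1(b)$ and $\mathrm{pr}_2(f(b))=f(\mathrm{pr}_2(b))$. Let $\mathcal{G}=\{\pi\in\mathscr{S}(A)\mid \pi{\upharpoonright}A_n\in\mathcal{G}_n\text{ for all }n\}$. $\mathcal{V}$ is the permutation model determined by $\mathcal{G}$ and finite supports: $x\in\mathcal{V}$ iff $x\subseteq\mathcal{V}$ and there is a finite $B\subseteq A$ (a support of $x$) such that every $\pi\in\mathcal{G}$ fixing $B$ pointwise fixes $x$. For $p\in P$, $S_p=\{a\in A\mid \mathrm{pr}_1(a)=p\}$. For sets $X,Y$, $|X|\leqslant|Y|$ means there is an injection from $X$ into $Y$, and $|X|\leqslant^\ast|Y|$ means there is a surjection from a subset of $Y$ onto $X$ (both computed in $\mathcal{V}$). *)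

(* Permutation model V of the paper, restricted to what is
   needed to speak about |S_p| <= |S_q| and |S_p| <=* |S_q| in V. *)
From Stdlib Require Import List Arith.
Set Implicit Arguments.

Section Model.
Variable P : Type.
Variable le : P -> P -> Prop.
Variable lestar : P -> P -> Prop.

Definition lt (p q : P) : Prop := le p q /\ p <> q.

(* Raw quadruples.  A0 p k  = <0,p,∅,k> ;  AS n q a k = <n+1,q,a,k>. *)
Inductive raw : Type :=
| A0 : P -> nat -> raw
| AS : nat -> P -> raw -> nat -> raw.

Definition lvl (a : raw) : nat :=
  match a with A0 _ _ => 0 | AS n _ _ _ => S n end.
Definition pr1 (a : raw) : P :=
  match a with A0 p _ => p | AS _ q _ _ => q end.
(* pr_2 when it is an atom (None stands for ∅) *)
Definition parent (a : raw) : option raw :=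
  match a with A0 _ _ => None | AS _ _ b _ => Some b end.

(* a ∈ A  (and then a ∈ A_n iff lvl a <= n) *)
Fixpoint valid (a : raw) : Prop :=
  match a with
  | A0 _ _ => True
  | AS n q b k =>
      valid b /\ lvl b <= n /\
      ((lt (pr1 b) q /\ k = 0) \/ (~ le (pr1 b) q /\ lestar (pr1 b) q))
  end.

Definition Atom : Type := { a : raw | valid a }.

Definition alvl (a : Atom) : nat := lvl (proj1_sig a).
Definition apr1 (a : Atom) : P := pr1 (proj1_sig a).

(* π ∈ 𝒢 : π is a permutation of A with π↾A_n ∈ 𝒢_n for every n, written out:
   π↾A_n is a permutation of A_n, π preserves pr_1, and for atoms b of
   positive level pr_2(π b) = π(pr_2 b). *)
Definition inG (pi : Atom -> Atom) : Prop :=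
  (exists pinv : Atom -> Atom,
      (forall a, pinv (pi a) = a) /\ (forall a, pi (pinv a) = a)) /\
  (forall (n : nat) (a : Atom), alvl (pi a) <= n <-> alvl a <= n) /\
  (forall a : Atom, apr1 (pi a) = apr1 a) /\
  (forall b a : Atom, parent (proj1_sig b) = Some (proj1_sig a) ->
                      parent (proj1_sig (pi b)) = Some (proj1_sig (pi a))).

(* A set R of ordered pairs of atoms belongs to V iff it has a finite support
   (its elements, pairs of atoms, are always in V). π fixes R iff π[R] = R. *)
Definition in_V (R : Atom -> Atom -> Prop) : Prop :=
  exists B : list Atom,
    forall pi : Atom -> Atom, inG pi ->
      (forall b, In b B -> pi b = b) ->
      forall x y : Atom,
        R x y <-> (exists x' y', R x' y' /\ pi x' = x /\ pi y' = y).

(* |S_p| <= |S_q| in V: an injection S_p -> S_q lying in V *)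
Definition card_le_V (p q : P) : Prop :=
  exists R : Atom -> Atom -> Prop,
    in_V R /\
    (forall x y, R x y -> apr1 x = p /\ apr1 y = q) /\
    (forall x, apr1 x = p -> exists y, R x y) /\
    (forall x y y', R x y -> R x y' -> y = y') /\
    (forall x x' y, R x y -> R x' y -> x = x').

(* |S_p| <=* |S_q| in V: a surjection from a subset of S_q onto S_p lying in V *)
Definition card_le_star_V (p q : P) : Prop :=
  exists R : Atom -> Atom -> Prop,
    in_V R /\
    (forall y x, R y x -> apr1 y = q /\ apr1 x = p) /\
    (forall y x x', R y x -> R y x' -> x = x') /\
    (forall x, apr1 x = p -> exists y, R y x).

End Model.

(* Two atoms that differ only in their last coordinate can be exchanged, together with
   all atoms built on top of them, by a single permutation in 𝒢 ([swap]).

   If p ≺ q, sending a ∈ S_p to its child ⟨lvl a + 1, q, a, 0⟩ is a 𝒢-invariant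
   injection S_p → S_q. If p ≼* q but not p ≼ q, every ⟨lvl a + 1, q, a, k⟩ is an atom,
   and sending such children back to a is a 𝒢-invariant surjection onto S_p.

   Conversely, let a relation with finite support B witness |S_p| ≤ |S_q| or
   |S_p| ≤* |S_q|, and relate x = ⟨0, p, ∅, N⟩, with N above every index occurring in B,
   to some y ∈ S_q. If x does not occur in the construction of y, exchanging x with
   another fresh root fixes B and y but moves x, which contradicts injectivity
   (resp. functionality). So y is built on x, and the chain from x to y climbs along ≼*,
   whence p ≼* q. If some step of that chain is not a ≼-step, its index is free, and
   exchanging it fixes B and x but moves y, contradicting functionality; hence all steps
   are ≺-steps and p ≼ q. *)

From Stdlib Require Import List Arith Lia ClassicalEpsilon ProofIrrelevance.

Section Atoms.
Variable P : Type.
Variables le lestar : P -> P -> Prop.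
Notation raw := (raw P).
Notation Atom := (Atom le lestar).
Notation valid := (valid le lestar).
Notation lt := (lt le).

Fixpoint ancestor (c a : raw) : Prop :=
  a = c \/ match a with A0 _ _ => False | AS _ _ b _ => ancestor c b end.

Definition idx (a : raw) : nat := match a with A0 _ k | AS _ _ _ k => k end.

Fixpoint maxidx (a : raw) : nat :=
  match a with A0 _ k => k | AS _ _ b k => Nat.max k (maxidx b) end.

Lemma ancestor_refl a : ancestor a a.
Proof. destruct a; left; reflexivity. Qed.

Lemma ancestor_trans c b a : ancestor c b -> ancestor b a -> ancestor c a.
Proof.
  induction a as [p k | n q a' IH k]; intros Hcb [-> | Hba]; auto.
  - destruct Hba.
  - right. auto.
Qed.

Lemma ancestor_lvl c a : valid a -> ancestor c a -> lvl c <= lvl a.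
Proof.
  induction a as [p k | n q b IH k]; intros Ha [-> | Hc]; auto; try easy.
  destruct Ha as [Hb [Hbn _]]. specialize (IH Hb Hc). simpl. lia.
Qed.

Lemma ancestor_lvl_eq c a : valid a -> ancestor c a -> lvl c = lvl a -> c = a.
Proof.
  destruct a as [p k | n q b k]; intros Ha [-> | Hc] Hlvl; auto; try easy.
  destruct Ha as [Hb [Hbn _]]. pose proof (ancestor_lvl _ _ Hb Hc). simpl in Hlvl. lia.
Qed.

Lemma ancestor_uniq c c' a :
  valid a -> lvl c = lvl c' -> ancestor c a -> ancestor c' a -> c = c'.
Proof.
  induction a as [p k | n q b IH k]; intros Ha Hlvl Hc Hc'.
  - destruct Hc as [<- | []], Hc' as [<- | []]. reflexivity.
  - destruct Hc as [<- | Hc].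
    + symmetry. apply ancestor_lvl_eq; auto.
    + destruct Hc' as [<- | Hc'].
      * apply ancestor_lvl_eq; simpl; auto.
      * apply IH; auto. apply Ha.
Qed.

Lemma ancestor_maxidx c a : ancestor c a -> idx c <= maxidx a.
Proof.
  induction a as [p k | n q b IH k]; intros [<- | Hc]; simpl; try lia; try easy.
  specialize (IH Hc). lia.
Qed.

Lemma parent_valid b a : valid b -> parent b = Some a -> valid a /\ lvl a < lvl b.
Proof.
  destruct b as [p k | n q c k]; intros Hb Hpar; try discriminate.
  injection Hpar as <-. destruct Hb as [Hc [Hcn _]]. split; [exact Hc | simpl; lia].
Qed.

Definition reidx (a : raw) (k : nat) : raw :=
  match a with A0 p _ => A0 p k | AS n q b _ => AS n q b k end.

Definition reindexable (a : raw) : Prop :=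
  match a with A0 _ _ => True | AS _ q b _ => ~ le (pr1 b) q end.

Lemma reidx_valid a k : valid a -> reindexable a -> valid (reidx a k).
Proof.
  destruct a as [p j | n q b j]; simpl; auto.
  intros [Hb [Hbn [[[Hle _] _] | Hstar]]] Hnle; [contradiction | auto].
Qed.

Lemma reidx_lvl a k : lvl (reidx a k) = lvl a.
Proof. destruct a; reflexivity. Qed.

Lemma reidx_pr1 a k : pr1 (reidx a k) = pr1 a.
Proof. destruct a; reflexivity. Qed.

Lemma reidx_parent a k : parent (reidx a k) = parent a.
Proof. destruct a; reflexivity. Qed.

Lemma reidx_idx a k : idx (reidx a k) = k.
Proof. destruct a; reflexivity. Qed.

Lemma ancestor_reidx c a k : ancestor c a -> lvl c < lvl a -> ancestor c (reidx a k).
Proof.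
  destruct a as [p j | n q b j]; intros [-> | Hc] Hlvl; simpl in *; try lia; auto.
Qed.

Lemma atom_eq (a b : Atom) : proj1_sig a = proj1_sig b -> a = b.
Proof.
  destruct a as [a Ha], b as [b Hb]; simpl. intros <-. f_equal. apply proof_irrelevance.
Qed.

Section Swap.
Variables (u : raw) (k : nat).
Let v := reidx u k.

Definition swap_node (a : raw) : raw :=
  if excluded_middle_informative (a = u) then v
  else if excluded_middle_informative (a = v) then u else a.

Lemma swap_node_u : swap_node u = v.
Proof. unfold swap_node. destruct (excluded_middle_informative (u = u)); congruence. Qed.

Lemma swap_node_v : swap_node v = u.
Proof.
  unfold swap_node.
  destruct (excluded_middle_informative (v = u)), (excluded_middle_informative (v = v));
    congruence.
Qed.

Lemma swap_node_other a : a <> u -> a <> v -> swap_node a = a.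
Proof.
  unfold swap_node.
  destruct (excluded_middle_informative (a = u)), (excluded_middle_informative (a = v));
    congruence.
Qed.

Lemma swap_node_cases a :
  (a = u /\ swap_node a = v) \/ (a = v /\ swap_node a = u) \/ swap_node a = a.
Proof.
  destruct (classic (a = u)) as [-> | Hu]; [left; auto using swap_node_u |].
  destruct (classic (a = v)) as [-> | Hv]; [right; left; auto using swap_node_v |].
  right; right. apply swap_node_other; auto.
Qed.

Lemma swap_node_invol a : swap_node (swap_node a) = a.
Proof.
  destruct (swap_node_cases a) as [[-> ->] | [[-> ->] | E]];
    rewrite ?E; auto using swap_node_u, swap_node_v.
Qed.

Lemma swap_node_lvl a : lvl (swap_node a) = lvl a.
Proof.
  destruct (swap_node_cases a) as [[-> ->] | [[-> ->] | ->]];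
    unfold v; rewrite ?reidx_lvl; reflexivity.
Qed.

Lemma swap_node_pr1 a : pr1 (swap_node a) = pr1 a.
Proof.
  destruct (swap_node_cases a) as [[-> ->] | [[-> ->] | ->]];
    unfold v; rewrite ?reidx_pr1; reflexivity.
Qed.

Lemma swap_node_parent a : parent (swap_node a) = parent a.
Proof.
  destruct (swap_node_cases a) as [[-> ->] | [[-> ->] | ->]];
    unfold v; rewrite ?reidx_parent; reflexivity.
Qed.

Lemma swap_node_valid a :
  valid u -> reindexable u -> valid a -> valid (swap_node a).
Proof.
  intros Hu Hr Ha.
  destruct (swap_node_cases a) as [[-> ->] | [[-> ->] | ->]]; unfold v; auto using reidx_valid.
Qed.

Fixpoint swap_raw (a : raw) : raw :=
  if lvl a <=? lvl u then swap_node a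
  else match a with A0 _ _ => a | AS n q b j => AS n q (swap_raw b) j end.

Lemma swap_raw_eq a :
  swap_raw a = if lvl a <=? lvl u then swap_node a
  else match a with A0 _ _ => a | AS n q b j => AS n q (swap_raw b) j end.
Proof. destruct a; reflexivity. Qed.

Lemma swap_raw_high n q b j :
  lvl u < S n -> swap_raw (AS n q b j) = AS n q (swap_raw b) j.
Proof.
  intro H. rewrite swap_raw_eq.
  destruct (Nat.leb_spec (lvl (AS n q b j)) (lvl u)); simpl in *; [lia | reflexivity].
Qed.

Lemma swap_raw_low a : lvl a <= lvl u -> swap_raw a = swap_node a.
Proof. intro H. rewrite swap_raw_eq. destruct (Nat.leb_spec (lvl a) (lvl u)); auto; lia. Qed.

Lemma swap_raw_below a : lvl a < lvl u -> swap_raw a = a.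
Proof.
  intro H. rewrite swap_raw_low by lia.
  apply swap_node_other; intro E; rewrite E in H; unfold v in H; rewrite ?reidx_lvl in H; lia.
Qed.

Lemma swap_raw_u : swap_raw u = v.
Proof. rewrite swap_raw_low by lia. apply swap_node_u. Qed.

Lemma swap_raw_lvl a : lvl (swap_raw a) = lvl a.
Proof.
  destruct (Nat.le_gt_cases (lvl a) (lvl u)).
  - rewrite swap_raw_low by auto. apply swap_node_lvl.
  - destruct a as [p j | n q b j]; simpl in H; [lia |]. rewrite swap_raw_high; auto.
Qed.

Lemma swap_raw_pr1 a : pr1 (swap_raw a) = pr1 a.
Proof.
  destruct (Nat.le_gt_cases (lvl a) (lvl u)).
  - rewrite swap_raw_low by auto. apply swap_node_pr1.
  - destruct a as [p j | n q b j]; simpl in H; [lia |]. rewrite swap_raw_high; auto.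
Qed.

Lemma swap_raw_invol a : swap_raw (swap_raw a) = a.
Proof.
  assert (Hlow : forall a, lvl a <= lvl u -> swap_raw (swap_raw a) = a).
  { intros a' H. rewrite (swap_raw_low a' H), swap_raw_low by (rewrite swap_node_lvl; exact H).
    apply swap_node_invol. }
  induction a as [p j | n q b IH j].
  - apply Hlow. simpl. lia.
  - destruct (Nat.le_gt_cases (S n) (lvl u)).
    + apply Hlow. exact H.
    + rewrite !swap_raw_high, IH; auto.
Qed.

Lemma swap_raw_valid a : valid u -> reindexable u -> valid a -> valid (swap_raw a).
Proof.
  intros Hu Hr. induction a as [p j | n q b IH j]; intro Ha.
  - rewrite swap_raw_low by (simpl; lia). apply swap_node_valid; auto.
  - destruct (Nat.le_gt_cases (S n) (lvl u)).
    + rewrite swap_raw_low by auto. apply swap_node_valid; auto.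
    + rewrite swap_raw_high by auto. destruct Ha as [Hb [Hbn Hstep]].
      simpl. rewrite swap_raw_lvl, swap_raw_pr1. auto.
Qed.

Lemma swap_raw_fix a : ~ ancestor u a -> ~ ancestor v a -> swap_raw a = a.
Proof.
  induction a as [p j | n q b IH j]; intros Hu Hv.
  - rewrite swap_raw_low by (simpl; lia).
    apply swap_node_other; intro E; [apply Hu | apply Hv]; left; exact E.
  - destruct (Nat.le_gt_cases (S n) (lvl u)).
    + rewrite swap_raw_low by auto.
      apply swap_node_other; intro E; [apply Hu | apply Hv]; left; exact E.
    + rewrite swap_raw_high, IH; auto; intro Hb; [apply Hu | apply Hv]; right; exact Hb.
Qed.

Lemma swap_raw_ancestor_low a :
  valid a -> ancestor u a -> lvl a <= lvl u -> swap_raw a = v.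
Proof.
  intros Ha Hua Hlvl.
  assert (u = a) as <- by (apply ancestor_lvl_eq; auto; pose proof (ancestor_lvl _ _ Ha Hua); lia).
  apply swap_raw_u.
Qed.

Lemma swap_raw_ancestor a : valid a -> ancestor u a -> ancestor v (swap_raw a).
Proof.
  induction a as [p j | n q b IH j]; intros Ha Hua.
  - rewrite swap_raw_ancestor_low by (simpl; auto; lia). apply ancestor_refl.
  - destruct (Nat.le_gt_cases (S n) (lvl u)).
    + rewrite swap_raw_ancestor_low by auto. apply ancestor_refl.
    + rewrite swap_raw_high by auto. destruct Hua as [E | Hub]; [rewrite <- E in H; simpl in H; lia |].
      right. apply IH; [apply Ha | exact Hub].
Qed.

Lemma swap_raw_parent b a :
  valid b -> parent b = Some a -> parent (swap_raw b) = Some (swap_raw a).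
Proof.
  intros Hb Hpar. destruct (parent_valid _ _ Hb Hpar) as [_ Hab].
  destruct (Nat.le_gt_cases (lvl b) (lvl u)).
  - rewrite swap_raw_low, swap_node_parent, swap_raw_below by (auto; lia). exact Hpar.
  - destruct b as [p j | n q c j]; [discriminate |]. injection Hpar as <-.
    rewrite swap_raw_high by auto. reflexivity.
Qed.

Definition swap (Hu : valid u) (Hr : reindexable u) (a : Atom) : Atom :=
  exist _ (swap_raw (proj1_sig a)) (swap_raw_valid _ Hu Hr (proj2_sig a)).

Lemma swap_inG (Hu : valid u) (Hr : reindexable u) : inG (swap Hu Hr).
Proof.
  split; [| split; [| split]].
  - exists (swap Hu Hr). split; intro a; apply atom_eq; apply swap_raw_invol.
  - intros n a. unfold alvl. simpl. rewrite swap_raw_lvl. reflexivity.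
  - intro a. apply swap_raw_pr1.
  - intros b a Hpar. apply swap_raw_parent; [apply proj2_sig | exact Hpar].
Qed.

Lemma swap_fix (Hu : valid u) (Hr : reindexable u) (a : Atom) :
  ~ ancestor u (proj1_sig a) -> ~ ancestor v (proj1_sig a) -> swap Hu Hr a = a.
Proof. intros Hua Hva. apply atom_eq. apply swap_raw_fix; auto. Qed.

End Swap.

Section Group.
Variable pi : Atom -> Atom.
Hypothesis pi_G : inG pi.

Lemma inG_alvl a : alvl (pi a) = alvl a.
Proof.
  destruct pi_G as [_ [Hlvl _]].
  pose proof (proj1 (Hlvl (alvl (pi a)) a) (le_n _)).
  pose proof (proj2 (Hlvl (alvl a) a) (le_n _)). lia.
Qed.

Lemma inG_apr1 a : apr1 (pi a) = apr1 a.
Proof. apply pi_G. Qed.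

Lemma inG_parent b a :
  parent (proj1_sig b) = Some (proj1_sig a) -> parent (proj1_sig (pi b)) = Some (proj1_sig (pi a)).
Proof. apply pi_G. Qed.

Lemma inG_injective a a' : pi a = pi a' -> a = a'.
Proof.
  destruct pi_G as [[pinv [Hinv _]] _]. intro E.
  rewrite <- (Hinv a), <- (Hinv a'), E. reflexivity.
Qed.

Lemma inG_parent_reflect b a :
  parent (proj1_sig (pi b)) = Some (proj1_sig (pi a)) -> parent (proj1_sig b) = Some (proj1_sig a).
Proof.
  intro Hpar. pose proof (inG_alvl b) as Hlvl. destruct b as [[p j | n q c j] Hb].
  - unfold alvl in Hlvl. destruct (proj1_sig (pi _)); [discriminate | discriminate Hlvl].
  - set (c' := exist _ c (proj1 Hb) : Atom).
    assert (Hc : pi c' = pi a).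
    { pose proof (inG_parent (exist (fun r => valid r) _ Hb) c' eq_refl) as Hpar'.
      apply atom_eq. congruence. }
    simpl. rewrite <- (inG_injective _ _ Hc). reflexivity.
Qed.

Lemma inG_inverse pinv :
  (forall a, pinv (pi a) = a) -> (forall a, pi (pinv a) = a) -> inG pinv.
Proof.
  intros Hl Hr. split; [| split; [| split]].
  - exists pi. auto.
  - intros n a. rewrite <- (inG_alvl (pinv a)), Hr. reflexivity.
  - intro a. rewrite <- (inG_apr1 (pinv a)), Hr. reflexivity.
  - intros b a Hpar. apply inG_parent_reflect. rewrite !Hr. exact Hpar.
Qed.

End Group.

Lemma closed_in_V (R : Atom -> Atom -> Prop) :
  (forall pi, inG pi -> forall x y, R x y -> R (pi x) (pi y)) -> in_V R.
Proof.
  intro Hclosed. exists nil. intros pi Hpi _ x y. split.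
  - intro Hxy. pose proof Hpi as [[pinv [Hl Hr]] _].
    exists (pinv x), (pinv y). split; auto.
    apply Hclosed; auto. apply (inG_inverse pi Hpi); auto.
  - intros [x' [y' [Hxy' [<- <-]]]]. auto.
Qed.

Lemma in_V_flip (R : Atom -> Atom -> Prop) : in_V R -> in_V (fun x y => R y x).
Proof.
  intros [B HB]. exists B. intros pi Hpi HfixB x y. rewrite (HB pi Hpi HfixB y x).
  split; intros [y' [x' H]]; exists x', y'; tauto.
Qed.

Definition child_of (p q : P) (x y : Atom) : Prop :=
  apr1 x = p /\ apr1 y = q /\ alvl y = S (alvl x) /\
  parent (proj1_sig y) = Some (proj1_sig x).

Lemma child_of_in_V p q : in_V (child_of p q).
Proof.
  apply closed_in_V. intros pi Hpi x y (Hx & Hy & Hlvl & Hpar).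
  repeat split.
  - rewrite (inG_apr1 pi Hpi). exact Hx.
  - rewrite (inG_apr1 pi Hpi). exact Hy.
  - rewrite !(inG_alvl pi Hpi). exact Hlvl.
  - apply (inG_parent pi Hpi). exact Hpar.
Qed.

Lemma child_of_exists p q x :
  lt p q \/ (~ le p q /\ lestar p q) -> apr1 x = p -> exists y, child_of p q x y.
Proof.
  intros Hpq Hx.
  assert (Hy : valid (AS (alvl x) q (proj1_sig x) 0)).
  { simpl. unfold apr1 in Hx. rewrite Hx. split; [apply proj2_sig | split; [auto |]].
    destruct Hpq; [left | right]; auto. }
  exists (exist _ _ Hy). repeat split; auto.
Qed.

Lemma child_of_parent_inj p q x x' y : child_of p q x y -> child_of p q x' y -> x = x'.
Proof.
  intros (_ & _ & _ & Hpar) (_ & _ & _ & Hpar'). apply atom_eq. congruence.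
Qed.

(* Since [p ≼ q], only the [≺]-clause of [A_{n+1}] can produce [y], and it forces index [0]. *)
Lemma child_of_raw p q x y :
  le p q -> child_of p q x y -> proj1_sig y = AS (alvl x) q (proj1_sig x) 0.
Proof.
  intros Hpq (Hx & Hy & Hlvl & Hpar).
  destruct y as [[p' j | n q' c j] Hvalid]; unfold alvl, apr1 in *; simpl in *;
    [discriminate |].
  injection Hlvl as ->. injection Hpar as ->. subst q'.
  destruct Hvalid as (_ & _ & [[_ ->] | [Hnle _]]); [reflexivity |].
  rewrite Hx in Hnle. contradiction.
Qed.

Lemma card_le_V_refl p : card_le_V le lestar p p.
Proof.
  exists (fun x y => apr1 x = p /\ x = y). split; [| split; [| split; [| split]]].
  - apply closed_in_V. intros pi Hpi x y [Hx Exy]. subst y. split; auto.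
    rewrite (inG_apr1 pi Hpi). exact Hx.
  - intros x y [Hx Exy]. subst y. auto.
  - intros x Hx. exists x. auto.
  - intros x y y' [_ E] [_ E']. congruence.
  - intros x x' y [_ E] [_ E']. congruence.
Qed.

Lemma card_le_V_of_lt p q : lt p q -> card_le_V le lestar p q.
Proof.
  intro Hpq. exists (child_of p q).
  split; [apply child_of_in_V | split; [| split; [| split]]].
  - intros x y Hxy. split; apply Hxy.
  - intros x Hx. apply child_of_exists; auto.
  - intros x y y' Hxy Hxy'. apply atom_eq.
    rewrite (child_of_raw _ _ _ _ (proj1 Hpq) Hxy), (child_of_raw _ _ _ _ (proj1 Hpq) Hxy').
    reflexivity.
  - intros x x' y. apply child_of_parent_inj.
Qed.

Lemma card_le_V_of_le p q : le p q -> card_le_V le lestar p q.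
Proof.
  intro Hpq. destruct (classic (p = q)) as [<- | Hne].
  - apply card_le_V_refl.
  - apply card_le_V_of_lt. split; auto.
Qed.

Lemma card_le_star_V_of_card_le_V p q : card_le_V le lestar p q -> card_le_star_V le lestar p q.
Proof.
  intros (R & HR & Hty & Htot & Hfun & Hinj).
  exists (fun y x => R x y). split; [apply in_V_flip; exact HR | split; [| split]].
  - intros y x Hxy. split; apply (Hty _ _ Hxy).
  - intros y x x' Hxy Hx'y. apply (Hinj _ _ _ Hxy Hx'y).
  - exact Htot.
Qed.

Lemma card_le_star_V_of_lestar p q : lestar p q -> card_le_star_V le lestar p q.
Proof.
  intro Hpq. destruct (classic (le p q)) as [Hle | Hnle].
  - apply card_le_star_V_of_card_le_V, card_le_V_of_le. exact Hle.
  - exists (fun y x => child_of p q x y).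
    split; [apply in_V_flip, child_of_in_V | split; [| split]].
    + intros y x Hxy. split; apply Hxy.
    + intros y x x' Hxy Hx'y. apply (child_of_parent_inj _ _ _ _ _ Hxy Hx'y).
    + intros x Hx. apply child_of_exists; auto.
Qed.

Definition supports (B : list Atom) (R : Atom -> Atom -> Prop) : Prop :=
  forall pi : Atom -> Atom, inG pi -> (forall b, In b B -> pi b = b) ->
    forall x y, R x y <-> (exists x' y', R x' y' /\ pi x' = x /\ pi y' = y).

Lemma supports_image B R pi x y :
  supports B R -> inG pi -> (forall b, In b B -> pi b = b) -> R x y -> R (pi x) (pi y).
Proof. intros HB Hpi HfixB Hxy. apply (HB pi Hpi HfixB). eauto. Qed.

Definition fresh (B : list Atom) : nat :=
  S (list_max (map (fun b => maxidx (proj1_sig b)) B)).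

Lemma fresh_not_ancestor B b c : In b B -> fresh B <= idx c -> ~ ancestor c (proj1_sig b).
Proof.
  intros Hb Hc Hcb. apply ancestor_maxidx in Hcb.
  set (l := map (fun b : Atom => maxidx (proj1_sig b)) B).
  change (S (list_max l) <= idx c) in Hc.
  pose proof (proj1 (list_max_le l (list_max l)) (le_n _)) as Hmax.
  rewrite Forall_forall in Hmax.
  specialize (Hmax _ (in_map (fun b : Atom => maxidx (proj1_sig b)) _ _ Hb)). lia.
Qed.

Definition root (p : P) (k : nat) : Atom := exist _ (A0 p k) I.

Lemma supported_root_moves B R p (y : Atom) :
  supports B R -> ~ ancestor (A0 p (fresh B)) (proj1_sig y) ->
  exists x1, x1 <> root p (fresh B) /\
    (R (root p (fresh B)) y -> R x1 y) /\ (R y (root p (fresh B)) -> R y x1).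
Proof.
  intros HB Hy. set (N := fresh B) in *. set (K := N + S (maxidx (proj1_sig y))).
  set (s := swap (A0 p N) K I I).
  assert (HsB : forall b, In b B -> s b = b).
  { intros b Hb. apply swap_fix; apply (fresh_not_ancestor B); auto; simpl; lia. }
  assert (Hsy : s y = y).
  { apply swap_fix; auto. intro H. apply ancestor_maxidx in H. simpl in H. lia. }
  exists (s (root p N)). split; [| split; intro H; rewrite <- Hsy;
                                  apply (supports_image _ _ _ _ _ HB (swap_inG _ _ _ _) HsB H)].
  intro E. apply (f_equal (@proj1_sig _ _)) in E.
  change (swap_raw (A0 p N) K (A0 p N) = A0 p N) in E.
  rewrite swap_raw_u in E. injection E. unfold K. lia.
Qed.

Lemma supported_branch_moves B R p (y : Atom) w :
  supports B R -> valid w -> reindexable w -> 0 < lvl w ->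
  ancestor (A0 p (fresh B)) w -> ancestor w (proj1_sig y) ->
  exists y', y' <> y /\ (R (root p (fresh B)) y -> R (root p (fresh B)) y').
Proof.
  intros HB Hw Hr Hlvl Hxw Hwy. set (N := fresh B) in *.
  set (w' := reidx w (S (idx w))).
  assert (Hxw' : ancestor (A0 p N) w') by (apply ancestor_reidx; simpl; auto).
  set (s := swap w (S (idx w)) Hw Hr).
  assert (HsB : forall b, In b B -> s b = b).
  { intros b Hb. apply swap_fix; intro H;
      apply (fresh_not_ancestor B b (A0 p N) Hb (le_n _));
      [exact (ancestor_trans _ _ _ Hxw H) | exact (ancestor_trans _ _ _ Hxw' H)]. }
  assert (Hsx : s (root p N) = root p N).
  { apply swap_fix; intro H; apply ancestor_lvl in H; try exact I; simpl in H;
      unfold w' in H; rewrite ?reidx_lvl in H; lia. }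
  exists (s y). split.
  - intro E.
    pose proof (swap_raw_ancestor w (S (idx w)) _ (proj2_sig y) Hwy) as Hw'y.
    change (ancestor w' (proj1_sig (s y))) in Hw'y. rewrite E in Hw'y.
    assert (w = w') by (apply (ancestor_uniq _ _ _ (proj2_sig y)); auto; symmetry; apply reidx_lvl).
    apply (n_Sn (idx w)). rewrite <- (reidx_idx w (S (idx w))). f_equal. assumption.
  - intro H. rewrite <- Hsx. apply (supports_image _ _ _ _ _ HB (swap_inG _ _ _ _) HsB H).
Qed.

Section Orders.
Hypothesis le_refl : forall p, le p p.
Hypothesis le_trans : forall p q r, le p q -> le q r -> le p r.
Hypothesis ls_refl : forall p, lestar p p.
Hypothesis ls_trans : forall p q r, lestar p q -> lestar q r -> lestar p r.
Hypothesis le_ls : forall p q, le p q -> lestar p q.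

Lemma ancestor_lestar c a : valid a -> ancestor c a -> lestar (pr1 c) (pr1 a).
Proof.
  induction a as [p k | n q b IH k]; intros Ha [<- | Hcb]; auto; try easy.
  destruct Ha as [Hb [_ Hstep]]. apply (ls_trans _ _ _ (IH Hb Hcb)).
  destruct Hstep as [[[Hle _] _] | [_ Hls]]; auto.
Qed.

Lemma ancestor_le_or_branch c a :
  valid a -> ancestor c a ->
  le (pr1 c) (pr1 a) \/
  exists w, valid w /\ reindexable w /\ lvl c < lvl w /\ ancestor c w /\ ancestor w a.
Proof.
  induction a as [p k | n q b IH k]; intros Ha [<- | Hcb]; auto; try easy.
  pose proof Ha as [Hb [Hbn Hstep]].
  destruct (IH Hb Hcb) as [Hle | (w & Hw & Hr & Hlvl & Hcw & Hwb)].
  - destruct Hstep as [[[Hbq _] _] | [Hnle _]].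
    + left. simpl. eauto.
    + right. exists (AS n q b k). pose proof (ancestor_lvl _ _ Hb Hcb).
      split; [exact Ha | split; [exact Hnle | split; [simpl; lia |]]].
      split; [right; exact Hcb | apply ancestor_refl].
  - right. exists w. do 4 (split; [assumption |]). right. exact Hwb.
Qed.

Lemma le_of_card_le_V p q : card_le_V le lestar p q -> le p q.
Proof.
  intros (R & [B HB] & Hty & Htot & Hfun & Hinj).
  destruct (Htot (root p (fresh B)) eq_refl) as [y Hxy].
  destruct (Hty _ _ Hxy) as [_ <-].
  destruct (classic (ancestor (A0 p (fresh B)) (proj1_sig y))) as [Hxy_anc | Hxy_anc].
  - destruct (ancestor_le_or_branch _ _ (proj2_sig y) Hxy_anc)
      as [Hle | (w & Hw & Hr & Hlvl & Hxw & Hwy)]; [exact Hle | exfalso].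
    destruct (supported_branch_moves B R p y w HB Hw Hr Hlvl Hxw Hwy) as (y' & Hne & Hmove).
    apply Hne. symmetry. apply (Hfun _ _ _ Hxy (Hmove Hxy)).
  - exfalso. destruct (supported_root_moves B R p y HB Hxy_anc) as (x1 & Hne & Hmove & _).
    apply Hne. apply (Hinj _ _ _ (Hmove Hxy) Hxy).
Qed.

Lemma lestar_of_card_le_star_V p q : card_le_star_V le lestar p q -> lestar p q.
Proof.
  intros (R & [B HB] & Hty & Hfun & Hsurj).
  destruct (Hsurj (root p (fresh B)) eq_refl) as [y Hyx].
  destruct (Hty _ _ Hyx) as [<- _].
  destruct (classic (ancestor (A0 p (fresh B)) (proj1_sig y))) as [Hxy_anc | Hxy_anc].
  - apply (ancestor_lestar _ _ (proj2_sig y) Hxy_anc).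
  - exfalso. destruct (supported_root_moves B R p y HB Hxy_anc) as (x1 & Hne & _ & Hmove).
    apply Hne. apply (Hfun _ _ _ (Hmove Hyx) Hyx).
Qed.

End Orders.
End Atoms.

Theorem theorem2p7 (P : Type) (le lestar : P -> P -> Prop)
  (le_refl : forall p, le p p)
  (le_antisym : forall p q, le p q -> le q p -> p = q)
  (le_trans : forall p q r, le p q -> le q r -> le p r)
  (ls_refl : forall p, lestar p p)
  (ls_trans : forall p q r, lestar p q -> lestar q r -> lestar p r)
  (le_ls : forall p q, le p q -> lestar p q) :
  forall p q : P,
    (le p q <-> card_le_V le lestar p q) /\
    (lestar p q <-> card_le_star_V le lestar p q).
Proof.
  intros p q. split; split.
  - apply card_le_V_of_le.
  - apply le_of_card_le_V; assumption.
  - apply card_le_star_V_of_lestar.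
  - apply lestar_of_card_le_star_V; assumption.
Qed.
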